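(* For $w>0$, as an identity of formal power series in $z$, \[\mathrm{DAG}(z,w,u)=1+\frac{\mathcal H(z,w,u)}{1-\mathcal H\!\left(z,w,\frac w{1+w}\right)},\qquad\text{where }\ \mathcal H(z,w,u)=z\int_0^u \mathrm{DAG}\!\left(\frac z{1+w},w,t\right)dt.\]
   Context: For a labelled DAG $G$ (directed acyclic graph on vertex set $\{1,\dots,n\}$, $n\ge0$), $v(G),e(G),s(G)$ denote its numbers of vertices, edges and sources (vertices of in-degree $0$). $\mathrm{DAG}(z,w,u)=\sum_G \frac{z^{v(G)}w^{e(G)}u^{s(G)}}{(1+w)^{\binom{v(G)}{2}}v(G)!}$, summed over all labelled DAGs. (It is known that $\mathrm{DAG}(z,w,u)=\mathrm{Set}((u-1)z,w)/\mathrm{Set}(-z,w)$ with $\mathrm{Set}(z,w)=\sum_{n\ge0}\frac{z^n}{(1+w)^{\binom n2}n!}$.) *)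

From Stdlib Require Import Reals.
From Coquelicot Require Import Coquelicot.
From mathcomp Require Import ssreflect ssrfun ssrbool eqtype ssrnat seq
  choice fintype finset fingraph bigop binomial.

Set Implicit Arguments.
Unset Strict Implicit.
Unset Printing Implicit Defensive.

(* A directed graph on 'I_n is its set of arcs (x,y) meaning x -> y. *)
Definition digraph (n : nat) := {set 'I_n * 'I_n}.

Definition arc (n : nat) (E : digraph n) : rel 'I_n := fun a b => (a, b) \in E.

(* acyclic: no arc x -> y such that y reaches x (this also excludes loops) *)
Definition is_dag (n : nat) (E : digraph n) : bool :=
  [forall x : 'I_n, forall y : 'I_n, arc E x y ==> ~~ connect (arc E) y x].

Definition nedges (n : nat) (E : digraph n) : nat := #|E|.

Definition nsources (n : nat) (E : digraph n) : nat :=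
  #|[set v : 'I_n | [forall a : 'I_n, ~~ arc E a v]]|.

Definition fps := nat -> R.

Definition fps_one : fps := fun n => if n is 0 then 1%R else 0%R.
Definition fps_add (a b : fps) : fps := fun n => (a n + b n)%R.
Definition fps_sub (a b : fps) : fps := fun n => (a n - b n)%R.
Definition fps_mul (a b : fps) : fps :=
  fun n => \big[Rplus/0%R]_(k < n.+1) (a k * b (n - k)%N)%R.

Definition fps_zmul (a : fps) : fps := fun n => if n is m.+1 then a m else 0%R.

Definition fps_scale (c : R) (a : fps) : fps := fun n => (c ^ n * a n)%R.

Definition fps_int (F : R -> fps) (lo hi : R) : fps :=
  fun n => RInt (fun t => F t n) lo hi.

Fixpoint fps_inv_list (a : fps) (n : nat) : seq R :=
  match n with
  | 0 => [:: (/ a 0%N)%R]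
  | m.+1 =>
      let l := fps_inv_list a m in
      rcons l (- / a 0%N *
               \big[Rplus/0%R]_(k < m.+1) (a k.+1 * nth 0%R l (m - k)%N))%R
  end.

Definition fps_inv (a : fps) : fps := fun n => nth 0%R (fps_inv_list a n) n.

Definition fps_div (a b : fps) : fps := fps_mul a (fps_inv b).

Definition DAG_coef (w u : R) (n : nat) : R :=
  ((\big[Rplus/0%R]_(E : digraph n | is_dag E)
      (w ^ nedges E * u ^ nsources E))
   / ((1 + w) ^ 'C(n, 2) * INR n`!))%R.

Definition DAG (w u : R) : fps := fun n => DAG_coef w u n.

Definition H (w u : R) : fps :=
  fps_zmul (fps_int (fun t => fps_scale (/ (1 + w)) (DAG w t)) 0 u).

(* Write A_n(t) = [dag_poly w t n] for the sum of w^e(G) t^s(G) over the DAGs G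
   on n labelled vertices, so that [z^n] DAG(z,w,t) = A_n(t) / ((1+w)^C(n,2) n!).
   For n > 0, d/dt A_n(t) counts DAGs with a marked source x, weighted by
   w^e t^(s-1).  Such a DAG splits along the set M of proper descendants of x: an
   arbitrary DAG on the n-1-|M| remaining vertices (carrying the other sources),
   an arbitrary DAG on M, and a set of arcs from x and the remaining vertices into
   M that must contain the arc from x to each source of the DAG on M.  Summing out
   these arcs turns the weight w^s of those sources into
   (1+w)^((n-|M|)|M|) (w/(1+w))^s, so
     d/dt A_n(t) = sum_{x, M; x \notin M}
                     A_{n-1-|M|}(t) (1+w)^((n-|M|)|M|) A_{|M|}(w/(1+w)).
   Integrating over [0,u] and normalising gives DAG(u) = 1 + H(u) DAG(w/(1+w));
   at u = w/(1+w) this says DAG(w/(1+w)) = 1/(1 - H(w/(1+w))). *)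

From HB Require Import structures.
From Stdlib Require Import Reals Lra FunctionalExtensionality.
From Coquelicot Require Import Coquelicot.
From mathcomp Require Import ssreflect ssrfun ssrbool eqtype ssrnat seq
  choice fintype finset fingraph bigop binomial.
From mathcomp Require Import zify.

Set Implicit Arguments.
Unset Strict Implicit.
Unset Printing Implicit Defensive.

HB.instance Definition _ := Monoid.isComLaw.Build R 0%R Rplus
  (fun x y z => esym (Rplus_assoc x y z)) Rplus_comm Rplus_0_l.
HB.instance Definition _ := Monoid.isComLaw.Build R 1%R Rmult
  (fun x y z => esym (Rmult_assoc x y z)) Rmult_comm Rmult_1_l.
HB.instance Definition _ := Monoid.isMulLaw.Build R 0%R Rmult Rmult_0_l Rmult_0_r.
HB.instance Definition _ :=
  Monoid.isAddLaw.Build R Rmult Rplus Rmult_plus_distr_r Rmult_plus_distr_l.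

Section Acyclic.
Variable T : finType.
Implicit Types (e : rel T) (E : {set T * T}) (V : {set T}).

Lemma connect_closed_fwd e (A : {pred T}) x y :
  (forall a b, e a b -> a \in A -> b \in A) -> x \in A -> connect e x y -> y \in A.
Proof.
move=> clA + /connectP [p + ->]; elim: p x => [|z p IH] x //= xA /andP [exz pz].
exact: IH (clA _ _ exz xA) pz.
Qed.

Lemma connect_last_step e x y : connect e x y -> y != x ->
  exists2 z, connect e x z & e z y.
Proof.
move=> /connectP [p]; elim/last_ind: p => [_ -> | p z _]; first by rewrite eqxx.
(* [path] is not imported: its [arc] would shadow the one of the definitions. *)
rewrite path.rcons_path last_rcons => /andP [ep ez] -> _.
by exists (last x p) => //; apply/connectP; exists p.
Qed.

Definition arc_rel E : rel T := fun a b => (a, b) \in E.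

Definition acyclic E : bool :=
  [forall X : {set T}, (X != set0) ==>
     [exists v in X, [forall a in X, (a, v) \notin E]]].

Definition sources E V : {set T} := [set v in V | [forall a, (a, v) \notin E]].

Lemma acyclicP E :
  reflect (forall X, X != set0 -> exists2 v, v \in X & forall a, a \in X -> (a, v) \notin E)
          (acyclic E).
Proof.
apply: (iffP idP) => [/forallP acE X /(implyP (acE X)) | acE].
  by case/exists_inP => v vX /forall_inP; exists v.
apply/forallP => X; apply/implyP => /acE [v vX nv].
by apply/exists_inP; exists v => //; apply/forall_inP.
Qed.

Lemma acyclicS E E' : E' \subset E -> acyclic E -> acyclic E'.
Proof.
move=> /subsetP sE /acyclicP acE; apply/acyclicP => X /acE [v vX nv].
by exists v => // a /nv; apply: contra => /sE.
Qed.

Lemma acyclic_sources_neq0 E : acyclic E -> [set: T] != set0 -> sources E setT != set0.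
Proof.
move=> /acyclicP acE /acE [v _ nv]; apply/set0Pn; exists v.
by rewrite !inE; apply/forallP => a; apply: nv.
Qed.

End Acyclic.

Lemma is_dagE n (E : digraph n) : is_dag E = acyclic E.
Proof.
apply/idP/acyclicP => [/forallP noback X /set0Pn [x0 x0X] | acE].
  pose anc v := #|[set y | connect (arc E) y v]|.
  case: (@arg_minnP _ x0 (mem X) anc x0X) => v vX vmin.
  exists v => // a aX; apply/negP => av.
  have := vmin a aX; rewrite leqNgt => /negP; apply; apply: proper_card.
  apply/properP; split.
    apply/subsetP => y; rewrite !inE => cya.
    exact: connect_trans cya (connect1 (av : arc E a v)).
  exists v; first by rewrite inE connect0.
  by rewrite inE; apply: (implyP (forallP (noback a) v)).
apply/forallP => x; apply/forallP => y; apply/implyP => axy; apply/negP => cyx.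
pose X := [set z | connect (arc E) y z && connect (arc E) z x].
have /acE [v] : X != set0 by apply/set0Pn; exists y; rewrite inE connect0.
rewrite inE => /andP [cyv cvx] nv.
have [vy | vy] := eqVneq v y.
  by move: (nv x); rewrite vy inE cyx connect0 (axy : (x, y) \in E) => /(_ isT).
have [p cyp epv] := connect_last_step cyv vy.
have pX : p \in X by rewrite inE cyp (connect_trans (connect1 epv) cvx).
by move/negP: (nv p pX).
Qed.

Lemma sumR_const (K : finType) (A : {pred K}) c :
  \big[Rplus/0%R]_(i in A) c = (INR #|A| * c)%R.
Proof. by rewrite big_const; elim: #|A| => [|k IH]; rewrite ?iterS ?IH ?S_INR /=; lra. Qed.

Lemma prodR_const (K : finType) (A : {pred K}) a :
  \big[Rmult/1%R]_(i in A) a = (a ^ #|A|)%R.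
Proof. by rewrite big_const; elim: #|A| => //= k ->. Qed.

Section SubsetSums.
Variable K : finType.
Implicit Types (A B C D S : {set K}).

Lemma sum_pow_card_supsets (a : R) S B : S \subset B ->
  \big[Rplus/0%R]_(F : {set K} | F \subset B) (if S \subset F then a ^ #|F| else 0)%R
  = (a ^ #|S| * (1 + a) ^ (#|B| - #|S|))%R.
Proof.
(* Expand \prod_i (f i + g i) over all subsets F: the F-term is a^|F| if
   S \subset F \subset B, and 0 otherwise. *)
move=> /subsetP SB.
pose f i := if i \in B then a else 0%R.
pose g i := if i \in S then 0%R else 1%R.
have prodE (F : {set K}) : \big[Rmult/1%R]_i (if i \in F then f i else g i) =
               (if (F \subset B) && (S \subset F) then a ^ #|F| else 0)%R.
  case: ifP => [/andP [FB SF] | /negbT].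
    transitivity (\big[Rmult/1%R]_(i in F) a); last exact: prodR_const.
    rewrite [RHS]big_mkcond; apply: eq_bigr => i _.
    rewrite /f /g; case: ifP => [/(subsetP FB) -> // | iF].
    by case: ifP => // /(subsetP SF); rewrite iF.
  rewrite negb_and => /orP [] /subsetPn [i i1 i2];
    rewrite (bigD1 i) //= ?(negbTE i2) /f /g i1 ?(negbTE i2) Rmult_0_l //.
transitivity (\big[Rmult/1%R]_i (f i + g i))%R.
  rewrite bigA_distr big_mkcond; apply: eq_bigr => F _.
  by rewrite prodE; case: (F \subset B).
rewrite (bigID (mem S)) /= -!prodR_const; congr (_ * _)%R.
  by apply: eq_bigr => i iS; rewrite /f /g iS SB // Rplus_0_r.
rewrite -cardsDS ?(introT subsetP SB) //.
transitivity (\big[Rmult/1%R]_(i in B :\: S) (1 + a))%R; last exact: prodR_const.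
rewrite big_mkcond [RHS]big_mkcond; apply: eq_bigr => i _.
by rewrite /f /g !inE; case: (i \in S); case: (i \in B) => //=; lra.
Qed.

Lemma setI_eq0S A B C D : C \subset A -> D \subset B ->
  A :&: B = set0 -> C :&: D = set0.
Proof. by move=> CA DB AB0; apply/eqP; rewrite -subset0 -AB0 setISS. Qed.

Lemma setUIl_id A B C D : C \subset A -> D \subset B -> A :&: B = set0 ->
  (C :|: D) :&: A = C.
Proof.
move=> CA DB AB0; rewrite setIUl (setIidPl CA).
by rewrite setIC (setI_eq0S (subxx A) DB AB0) setU0.
Qed.

Lemma cardsU_setI_eq0 A B C D : C \subset A -> D \subset B -> A :&: B = set0 ->
  #|C :|: D| = (#|C| + #|D|)%N.
Proof. by move=> CA DB AB0; rewrite cardsU (setI_eq0S CA DB AB0) cards0 subn0. Qed.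

Lemma big_subset_setU A B (G : {set K} -> R) : A :&: B = set0 ->
  \big[Rplus/0%R]_(E : {set K} | E \subset A :|: B) G E =
  \big[Rplus/0%R]_(E1 : {set K} | E1 \subset A)
     \big[Rplus/0%R]_(E2 : {set K} | E2 \subset B) G (E1 :|: E2).
Proof.
move=> AB0; rewrite pair_big_dep /=.
rewrite (reindex_onto (fun p : {set K} * {set K} => p.1 :|: p.2)
                      (fun E => (E :&: A, E :&: B))) /=; last first.
  by move=> E EAB; rewrite -setIUr; apply/setIidPl.
apply: eq_bigl => [[E1 E2]] /=; apply/idP/idP.
  by move=> /andP [_ /eqP [<- <-]]; rewrite !subsetIr.
move=> /andP [E1A E2B]; rewrite setUSS // (setUIl_id E1A E2B AB0).
by rewrite setUC (setUIl_id E2B E1A) ?eqxx // setIC.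
Qed.

End SubsetSums.

Lemma sum_set_ord_card n (h : nat -> R) :
  \big[Rplus/0%R]_(M : {set 'I_n}) h #|M| =
  \big[Rplus/0%R]_(m < n.+1) (INR 'C(n, m) * h m)%R.
Proof.
have cardM (M : {set 'I_n}) : (#|M| < n.+1)%N.
  by rewrite ltnS -[n in (_ <= n)%N]card_ord max_card.
rewrite (partition_big (fun M : {set 'I_n} => Ordinal (cardM M)) xpredT) //=.
apply: eq_bigr => m _.
rewrite (eq_bigr (fun=> h m)) => [|M /eqP <- //].
rewrite sumR_const; congr (INR _ * _)%R.
have := card_draws 'I_n m; rewrite card_ord => <-.
by apply: eq_card => M; rewrite !inE.
Qed.

Definition dag_sum (T : finType) (w u : R) (V : {set T}) : R :=
  \big[Rplus/0%R]_(E : {set T * T} | (E \subset setX V V) && acyclic E)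
     (w ^ #|E| * u ^ #|sources E V|)%R.

Section Relabel.
Variables (T1 T2 : finType) (f : T1 -> T2).
Hypothesis f_inj : injective f.

Let fpair (p : T1 * T1) : T2 * T2 := (f p.1, f p.2).

Let fpair_inj : injective fpair.
Proof. by move=> [a b] [c d] [/f_inj -> /f_inj ->]. Qed.

Let fpairK (E : {set T1 * T1}) : fpair @^-1: (fpair @: E) = E.
Proof. by apply/setP => p; rewrite inE mem_imset //; exact: fpair_inj. Qed.

Lemma acyclic_imset (E : {set T1 * T1}) : acyclic (fpair @: E) = acyclic E.
Proof.
apply/acyclicP/acyclicP => acE X.
  move=> /set0Pn [x xX].
  have /acE [_ /imsetP [v vX ->] nv] : f @: X != set0.
    by apply/set0Pn; exists (f x); apply: imset_f.
  exists v => // a aX; apply: contra (nv _ (imset_f f aX)) => av.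
  exact: (imset_f fpair av).
move=> /set0Pn [y yX].
case: (pickP (fun x => f x \in X)) => [x fxX | noim].
  have /acE [v] : f @^-1: X != set0 by apply/set0Pn; exists x; rewrite inE.
  rewrite inE => fvX nv; exists (f v) => // a aX.
  apply/negP => /imsetP [[p1 p2] pE [ap1 /f_inj vp2]].
  by move: (nv p1); rewrite inE -ap1 aX vp2 pE => /(_ isT).
exists y => // a _; apply/negP => /imsetP [[p1 p2] _ [_ yp2]].
by move: (noim p2); rewrite -yp2 yX.
Qed.

Lemma sources_imset (E : {set T1 * T1}) (V : {set T1}) :
  sources (fpair @: E) (f @: V) = f @: sources E V.
Proof.
apply/setP => y; apply/idP/idP.
  rewrite inE => /andP [/imsetP [v vV ->] /forallP nv].
  rewrite mem_imset // inE vV; apply/forallP => a.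
  by apply: contra (nv (f a)) => av; apply: (imset_f fpair av).
case/imsetP => v; rewrite inE => /andP [vV /forallP nv] ->.
rewrite inE imset_f //=; apply/forallP => a.
apply/negP => /imsetP [[p1 p2] pE [_ /f_inj vp2]].
by move: (nv p1); rewrite vp2 pE.
Qed.

Lemma dag_sum_imset w u (V : {set T1}) : dag_sum w u (f @: V) = dag_sum w u V.
Proof.
rewrite /dag_sum (reindex_onto (fun E : {set T1 * T1} => fpair @: E)
                               (fun E' => fpair @^-1: E')) /=; last first.
  move=> E' /andP [/subsetP E'V _]; apply/setP => [[a b]]; apply/imsetP/idP.
    by case=> p; rewrite inE => pE' ->.
  move=> abE'; have := E'V _ abE'; rewrite inE /=.
  case/andP => /imsetP [a1 _ ea] /imsetP [b1 _ eb].
  by exists (a1, b1); rewrite ?inE /fpair /= -?ea -?eb.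
apply: eq_big => E.
  rewrite fpairK eqxx andbT acyclic_imset.
  congr (_ && _); apply/subsetP/subsetP => sE [a b].
    by move/(imset_f fpair)/sE; rewrite !inE /= !mem_imset.
  case/imsetP => [[a1 b1]] /sE + ->; rewrite /fpair !inE /= => /andP [a1V b1V].
  by rewrite !imset_f.
by move=> _; rewrite sources_imset !card_imset //; exact: fpair_inj.
Qed.

End Relabel.

Definition dag_poly (w u : R) (n : nat) : R :=
  \big[Rplus/0%R]_(E : digraph n | is_dag E) (w ^ nedges E * u ^ nsources E)%R.

Lemma dag_polyE w u n : dag_poly w u n = dag_sum w u [set: 'I_n].
Proof.
apply: eq_big => E.
  by rewrite is_dagE andb_idl // => _; apply/subsetP => p; rewrite !inE.
by move=> _; congr (_ * _ ^ _)%R; apply: eq_card => v; rewrite !inE.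
Qed.

Lemma dag_sum_card (T : finType) w u (V : {set T}) : dag_sum w u V = dag_poly w u #|V|.
Proof.
rewrite dag_polyE -(dag_sum_imset (@enum_val_inj _ (mem V))); congr dag_sum.
apply/setP => y; apply/idP/imsetP => [yV | [i _ ->]]; last exact: enum_valP.
by exists (enum_rank_in yV y); rewrite ?enum_rankK_in.
Qed.

Lemma dag_sum_shift (T : finType) (V : {set T}) (w : R) (N : nat) :
  (1 + w <> 0)%R -> (#|V| <= N)%N ->
  \big[Rplus/0%R]_(E : {set T * T} | (E \subset setX V V) && acyclic E)
      (w ^ #|E| * (w ^ #|sources E V| * (1 + w) ^ (N - #|sources E V|)))%R
  = ((1 + w) ^ N * dag_sum w (w / (1 + w)) V)%R.
Proof.
move=> w1 VN; rewrite /dag_sum big_distrr /=; apply: eq_bigr => E _.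
have sN : (#|sources E V| <= N)%N.
  by apply: leq_trans VN; apply: subset_leq_card; apply/subsetP => y; rewrite inE => /andP [].
have := pow_nonzero _ #|sources E V| w1.
rewrite -{2}(subnK sN) pow_add /Rdiv Rpow_mult_distr pow_inv.
move: #|sources E V| => s ws; by field.
Qed.

Section MarkedSource.
Variables (T : finType) (x : T) (M : {set T}).
Hypothesis xM : x \notin M.
Implicit Types (E : {set T * T}).

(* The arcs of a DAG in which x is a source with proper descendants M lie inside
   [rest], inside [M], or go from [x] or [rest] into [M]. *)
Definition rest := ~: (x |: M).
Definition rest_arcs := setX rest rest.
Definition desc_arcs := setX M M.
Definition into_arcs := setX (x |: rest) M.
Definition split_arcs := rest_arcs :|: (desc_arcs :|: into_arcs).

Definition proper_desc E := [set y | (y != x) && connect (arc_rel E) x y].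

Definition split_ok E : bool :=
  [&& E \subset split_arcs, acyclic (E :&: rest_arcs), acyclic (E :&: desc_arcs) &
      [forall y in sources (E :&: desc_arcs) M, (x, y) \in E]].

Lemma in_rest y : (y \in rest) = (y != x) && (y \notin M).
Proof. by rewrite !inE negb_or. Qed.

Lemma in_split_arcs a b :
  ((a, b) \in split_arcs) = (b != x) && ((a == x) || (a \in M) ==> (b \in M)).
Proof.
rewrite !inE /=.
by case: (eqVneq a x) => [-> | ax]; case: (eqVneq b x) => [-> | bx];
  rewrite ?eqxx ?(negbTE xM) //=; case: (a \in M); case: (b \in M).
Qed.

Lemma acyclic_split_arcs E : E \subset split_arcs ->
  acyclic (E :&: rest_arcs) -> acyclic (E :&: desc_arcs) -> acyclic E.
Proof.
move=> /subsetP Esplit /acyclicP acR /acyclicP acD; apply/acyclicP => X /set0Pn [y0 y0X].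
have arcE a b : (a, b) \in E -> (b != x) && ((a == x) || (a \in M) ==> (b \in M)).
  by move=> /Esplit; rewrite in_split_arcs.
have [/acR [v] | ] := boolP (X :&: rest != set0).
  rewrite inE in_rest => /andP [vX /andP [vx /negbTE vM]] nv; exists v => // a aX.
  apply/negP => av; have /andP [_] := arcE _ _ av.
  rewrite vM implybF negb_or => /andP [ax aM].
  have aXr : a \in X :&: rest by rewrite inE aX in_rest ax aM.
  by move: (nv a aXr); rewrite inE av in_setX !in_rest ax aM vx vM.
rewrite negbK => /eqP Xrest0.
have [xX | xX] := boolP (x \in X).
  by exists x => // a _; apply/negP => /arcE; rewrite eqxx.
have XM y : y \in X -> y \in M.
  move=> yX; apply: contraT => yM.
  have : y \in X :&: rest by rewrite inE yX in_rest yM andbT; apply: contraNneq xX => <-.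
  by rewrite Xrest0 inE.
have /acD [v vX nv] : X != set0 by apply/set0Pn; exists y0.
exists v => // a aX; apply: contra (nv a aX) => av.
by rewrite !inE av XM ?XM.
Qed.

Lemma split_ok_marked E : acyclic E -> x \in sources E setT -> proper_desc E = M ->
  split_ok E.
Proof.
move=> acE; rewrite !inE /= => /forallP xsrc descE.
have inM y : (y \in M) = (y != x) && connect (arc_rel E) x y by rewrite -descE inE.
have headx a b : (a, b) \in E -> b != x by move=> ab; apply: contraTneq ab => ->; apply: xsrc.
apply/and4P; split.
- apply/subsetP => [[a b]] ab; rewrite in_split_arcs (headx a b) //=.
  apply/implyP => /orP [/eqP ax | aM]; rewrite inM (headx a b) //=.
    by apply: connect1; rewrite /arc_rel -ax.
  by move: aM; rewrite inM => /andP [_ /connect_trans]; apply; apply: connect1.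
- by apply: acyclicS acE; apply: subsetIl.
- by apply: acyclicS acE; apply: subsetIl.
- apply/forall_inP => y; rewrite inE => /andP [yM /forallP ysrc].
  move: (yM); rewrite inM => /andP [yx /connect_last_step] [] // p cxp epy.
  have [<- // | px] := eqVneq p x.
  by move: (ysrc p); rewrite inE (epy : (p, y) \in E) in_setX yM inM px cxp.
Qed.

Lemma marked_split_ok E : split_ok E ->
  [&& acyclic E, x \in sources E setT & proper_desc E == M].
Proof.
case/and4P => Esplit acR acD /forall_inP forced.
have acE := acyclic_split_arcs Esplit acR acD.
have arcE a b : (a, b) \in E -> (b != x) && ((a == x) || (a \in M) ==> (b \in M)).
  by move=> ab; rewrite -in_split_arcs (subsetP Esplit).
have xsrc : x \in sources E setT.
  by rewrite !inE; apply/forallP => a; apply/negP => /arcE; rewrite eqxx.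
rewrite acE xsrc; apply/eqP/setP => y; rewrite inE; apply/idP/idP.
  case/andP => yx cxy.
  have : y \in x |: M.
    apply: connect_closed_fwd cxy; last by rewrite !inE eqxx.
    move=> a b /arcE /andP [_ /implyP abM]; rewrite !inE => aA.
    by rewrite abM ?orbT.
  by rewrite !inE (negbTE yx).
move=> yM; apply: contraT => ny.
have /(acyclicP _ acE) [v] : M :\: proper_desc E != set0.
  by apply/set0Pn; exists y; rewrite !inE yM andbT.
rewrite !inE => /andP [nvd vM] nv.
have vx : v != x by apply: contraNneq xM => <-.
rewrite vx /= in nvd.
have [vs | ] := boolP (v \in sources (E :&: desc_arcs) M).
  by rewrite (connect1 (forced v vs : arc_rel E x v)) in nvd.
rewrite inE vM /= => /forallPn [a]; rewrite negbK !inE => /andP [av /andP [aM _]].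
have [cxa | ncxa] := boolP (connect (arc_rel E) x a).
  by rewrite (connect_trans cxa (connect1 (av : arc_rel E a v))) in nvd.
have ax : a != x by apply: contraNneq xM => <-.
by move: (nv a); rewrite !inE aM ax ncxa av => /(_ isT).
Qed.

Lemma marked_sourceE E :
  [&& acyclic E, x \in sources E setT & proper_desc E == M] = split_ok E.
Proof.
apply/idP/idP => [/and3P [acE xsrc /eqP descE] | /marked_split_ok //].
exact: split_ok_marked.
Qed.

Definition forced_arcs E := setX [set x] (sources E M).

Lemma rest_arcs_disjoint : rest_arcs :&: (desc_arcs :|: into_arcs) = set0.
Proof.
apply/setP => [[a b]]; rewrite !inE /=.
by case: (eqVneq a x) => [-> | ax]; case: (eqVneq b x) => [-> | bx];
  rewrite ?eqxx ?(negbTE xM) /= ?andbF //; case: (a \in M); case: (b \in M).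
Qed.

Lemma desc_into_disjoint : desc_arcs :&: into_arcs = set0.
Proof.
apply/setP => [[a b]]; rewrite !inE /=.
by case: (eqVneq a x) => [-> | _]; rewrite ?(negbTE xM) //=; case: (a \in M); case: (b \in M).
Qed.

Lemma desc_arcs_disjoint : desc_arcs :&: (rest_arcs :|: into_arcs) = set0.
Proof.
rewrite setIUr desc_into_disjoint setU0 setIC.
exact: setI_eq0S (subxx _) (subsetUl _ _) rest_arcs_disjoint.
Qed.

Section Blocks.
Variables (E1 E2 E3 : {set T * T}).
Hypotheses (E1r : E1 \subset rest_arcs) (E2d : E2 \subset desc_arcs)
           (E3i : E3 \subset into_arcs).
Let E := E1 :|: (E2 :|: E3).

Let blocks_rest : E :&: rest_arcs = E1.
Proof. exact: setUIl_id E1r (setUSS E2d E3i) rest_arcs_disjoint. Qed.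

Let blocks_desc : E :&: desc_arcs = E2.
Proof. by rewrite /E setUCA; apply: setUIl_id E2d (setUSS E1r E3i) desc_arcs_disjoint. Qed.

Let blocks_from_x y : ((x, y) \in E) = ((x, y) \in E3).
Proof.
rewrite !inE; have /negbTE -> : (x, y) \notin E1.
  by apply: contra (subsetP E1r (x, y)) _; rewrite in_setX in_rest eqxx.
have /negbTE -> // : (x, y) \notin E2.
by apply: contra (subsetP E2d (x, y)) _; rewrite in_setX (negbTE xM).
Qed.

Let split_ok_blocks :
  split_ok E = [&& acyclic E1, acyclic E2 & forced_arcs E2 \subset E3].
Proof.
rewrite /split_ok blocks_rest blocks_desc /split_arcs setUSS ?setUSS //=.
congr [&& _, _ & _]; apply/forall_inP/subsetP => [forced [a b] | forced y ysrc].
  by rewrite !inE /= => /andP [/eqP -> ysrc]; rewrite -blocks_from_x forced // inE.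
by rewrite blocks_from_x forced // in_setX in_set1 eqxx.
Qed.

Let sources_blocks : forced_arcs E2 \subset E3 -> sources E setT = x |: sources E1 rest.
Proof.
move=> /subsetP forced; apply/setP => y; rewrite !inE /=.
have [-> | yx] /= := eqVneq y x.
  apply/forallP => a; apply/negP => /(subsetP (setUSS E1r (setUSS E2d E3i))).
  by rewrite -/split_arcs in_split_arcs eqxx.
have [yM | yM] /= := boolP (y \in M).
  apply/negP => /forallP noin.
  case: (boolP (y \in sources E2 M)) => [ysrc | ].
    by move/negP: (noin x); apply; rewrite blocks_from_x forced // in_setX in_set1 eqxx.
  rewrite inE yM /= => /forallPn [a]; rewrite negbK => ay.
  by move/negP: (noin a); apply; rewrite !inE ay orbT.
apply/forallP/forallP => noin a; apply: contra (noin a); rewrite !inE; first by move->.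
case/or3P => // ay.
  by have := subsetP E2d _ ay; rewrite inE /= (negbTE yM) andbF.
by have := subsetP E3i _ ay; rewrite inE /= (negbTE yM) andbF.
Qed.

Lemma weight_blocks (w t : R) :
  (if split_ok E then w ^ #|E| * t ^ (#|sources E setT|).-1 else 0)%R =
  ((if acyclic E1 then w ^ #|E1| * t ^ #|sources E1 rest| else 0) *
   ((if acyclic E2 then w ^ #|E2| else 0) *
    (if forced_arcs E2 \subset E3 then w ^ #|E3| else 0)))%R.
Proof.
rewrite split_ok_blocks.
case: (acyclic E1); case: (acyclic E2); case F: (forced_arcs E2 \subset E3) => /=; try lra.
rewrite sources_blocks // cardsU1 (_ : x \notin _) ?inE ?eqxx //=.
rewrite (cardsU_setI_eq0 E1r (setUSS E2d E3i) rest_arcs_disjoint).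
rewrite (cardsU_setI_eq0 E2d E3i desc_into_disjoint) !pow_add /=; ring.
Qed.

End Blocks.

Lemma sum_split_ok (w t : R) : (1 + w <> 0)%R ->
  \big[Rplus/0%R]_(E | split_ok E) (w ^ #|E| * t ^ (#|sources E setT|).-1)%R
  = (dag_sum w t rest * ((1 + w) ^ (#|rest|.+1 * #|M|) * dag_sum w (w / (1 + w)) M))%R.
Proof.
move=> w1.
rewrite (eq_bigl (fun E => (E \subset split_arcs) && split_ok E)); last first.
  by move=> E; rewrite andb_idl // => /and4P [].
rewrite big_mkcondr /split_arcs big_subset_setU; last exact: rest_arcs_disjoint.
under eq_bigr => E1 E1r.
  rewrite big_subset_setU; last exact: desc_into_disjoint.
  under eq_bigr => E2 E2d do under eq_bigr => E3 E3i do rewrite weight_blocks //.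
over.
have card_into : #|into_arcs| = (#|rest|.+1 * #|M|)%N.
  by rewrite cardsX cardsU1 in_rest eqxx.
have forced_into E2 : forced_arcs E2 \subset into_arcs.
  by apply: setXS; rewrite ?sub1set ?setU11 //; apply/subsetP => y; rewrite inE => /andP [].
rewrite -(dag_sum_shift w1 (leq_pmull #|M| (ltn0Sn #|rest|))) {1}/dag_sum.
rewrite big_mkcondr big_distrl /=; apply: eq_bigr => E1 _.
rewrite big_distrr /= big_mkcondr; apply: eq_bigr => E2 _.
case: (acyclic E2); last by rewrite big1 // => E3 _; rewrite Rmult_0_l Rmult_0_r.
rewrite -card_into -[#|sources E2 M|]mul1n -(cards1 x) -cardsX.
by rewrite -/(forced_arcs E2) -sum_pow_card_supsets ?forced_into // !big_distrr.
Qed.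

End MarkedSource.

Lemma sum_marked_sources (T : finType) (w t : R) : (1 + w <> 0)%R ->
  \big[Rplus/0%R]_(E : {set T * T} | acyclic E)
     \big[Rplus/0%R]_(x in sources E setT) (w ^ #|E| * t ^ (#|sources E setT|).-1)%R
  = \big[Rplus/0%R]_(M : {set T}) \big[Rplus/0%R]_(x | x \notin M)
      (dag_sum w t (rest x M) *
       ((1 + w) ^ (#|rest x M|.+1 * #|M|) * dag_sum w (w / (1 + w)) M))%R.
Proof.
move=> w1; rewrite (exchange_big_dep xpredT) //= [RHS](exchange_big_dep xpredT) //=.
apply: eq_bigr => x _.
rewrite (partition_big (proper_desc x) (fun M => x \notin M)) /=; last first.
  by move=> E _; rewrite inE eqxx.
apply: eq_bigr => M xM; rewrite -sum_split_ok //; apply: eq_bigl => E.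
by rewrite -andbA marked_sourceE.
Qed.

Lemma sum_marked_sources_ord n (w t : R) : (1 + w <> 0)%R ->
  \big[Rplus/0%R]_(E : digraph n | is_dag E)
     \big[Rplus/0%R]_(x in sources E setT) (w ^ #|E| * t ^ (#|sources E setT|).-1)%R
  = \big[Rplus/0%R]_(m < n.+1) (INR 'C(n, m) * (INR (n - m) *
      (dag_poly w t (n - m.+1) * ((1 + w) ^ ((n - m) * m) * dag_poly w (w / (1 + w)) m))))%R.
Proof.
move=> w1; rewrite (eq_bigl (@acyclic _)) => [|E]; last exact: is_dagE.
rewrite sum_marked_sources // -(sum_set_ord_card n (fun m => INR (n - m) *
  (dag_poly w t (n - m.+1) * ((1 + w) ^ ((n - m) * m) * dag_poly w (w / (1 + w)) m))))%R.
apply: eq_bigr => M _.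
rewrite (eq_bigr (fun=> dag_poly w t (n - #|M|.+1) *
    ((1 + w) ^ ((n - #|M|) * #|M|) * dag_poly w (w / (1 + w)) #|M|)))%R => [|x xM].
  rewrite sumR_const; congr (INR _ * _)%R.
  transitivity #|~: M|; first by apply: eq_card => x; rewrite !inE.
  by have := cardsC M; rewrite card_ord => e; rewrite -[X in (X - _)%N]e addKn.
have [ltMn card_rest] : (#|M| < n /\ #|rest x M| = n - #|M|.+1)%N.
  by have := cardsC (x |: M); rewrite cardsU1 xM card_ord /rest; lia.
by rewrite !dag_sum_card card_rest -subSn ?subSS.
Qed.

Lemma is_RInt_bigR (I : Type) (r : seq I) (P : pred I) (f : I -> R -> R) (v : I -> R) a b :
  (forall i, P i -> is_RInt (f i) a b (v i)) ->
  is_RInt (fun t => \big[Rplus/0%R]_(i <- r | P i) f i t) a b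
          (\big[Rplus/0%R]_(i <- r | P i) v i).
Proof.
move=> fv; elim: r => [|i r IH].
  rewrite big_nil; apply: (is_RInt_ext (fun _ => 0%R)) => [t _|]; first by rewrite big_nil.
  by have := is_RInt_const a b 0%R; rewrite /scal /= /mult /= Rmult_0_r.
rewrite big_cons; case: ifP => Pi.
  apply: (is_RInt_ext (fun t => plus (f i t) (\big[Rplus/0%R]_(j <- r | P j) f j t))).
    by move=> t _; rewrite big_cons Pi.
  exact: is_RInt_plus (fv i Pi) IH.
by apply: is_RInt_ext IH => t _; rewrite big_cons Pi.
Qed.

Lemma is_RInt_pow_derivative s u : is_RInt (fun t => INR s.+1 * t ^ s)%R 0 u (u ^ s.+1)%R.
Proof.
have -> : (u ^ s.+1 = scal (INR s.+1) (u ^ s.+1 / INR s.+1 - 0 ^ s.+1 / INR s.+1))%R.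
  have : INR s.+1 <> 0%R by apply: not_0_INR.
  by move: (INR s.+1) => k k0; rewrite /scal /= /mult /=; field.
exact: is_RInt_scal (is_RInt_pow 0 u s).
Qed.

Definition dag_poly_int (w : R) (j : nat) (u : R) : R := RInt (fun t => dag_poly w t j) 0 u.

Lemma is_RInt_dag_poly w j u : is_RInt (fun t => dag_poly w t j) 0 u (dag_poly_int w j u).
Proof.
apply: RInt_correct; eexists; apply: is_RInt_bigR => E _.
exact: is_RInt_scal (is_RInt_pow 0 u _).
Qed.

Lemma dag_poly_recursion n (w u : R) : (0 < n)%N -> (1 + w <> 0)%R ->
  dag_poly w u n = \big[Rplus/0%R]_(m < n.+1) (INR 'C(n, m) * (INR (n - m) *
      (dag_poly_int w (n - m.+1) u *
       ((1 + w) ^ ((n - m) * m) * dag_poly w (w / (1 + w)) m))))%R.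
Proof.
move=> n_gt0 w1.
(* [marked] is the t-derivative of [dag_poly w t n]. *)
pose marked t := \big[Rplus/0%R]_(E : digraph n | is_dag E)
  \big[Rplus/0%R]_(x in sources E setT) (w ^ #|E| * t ^ (#|sources E setT|).-1)%R.
have int_lhs : is_RInt marked 0 u (dag_poly w u n).
  apply: is_RInt_bigR => E dagE.
  have s_gt0 : (0 < #|sources E setT|)%N.
    rewrite card_gt0 acyclic_sources_neq0 -?is_dagE //.
    by apply/set0Pn; exists (Ordinal n_gt0).
  rewrite /nedges (_ : nsources E = #|sources E setT|); last first.
    by apply: eq_card => v; rewrite !inE.
  move: s_gt0; set s := #|sources E setT| => s_gt0.
  apply: (is_RInt_ext (fun t => w ^ #|E| * (INR s * t ^ s.-1)))%R => [t _|].
    by rewrite sumR_const Rmult_comm Rmult_assoc (Rmult_comm (t ^ _)).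
  have := is_RInt_scal _ 0 u (w ^ #|E|) _ (@is_RInt_pow_derivative s.-1 u).
  by rewrite prednK.
have int_rhs : is_RInt marked 0 u (\big[Rplus/0%R]_(m < n.+1) (INR 'C(n, m) * (INR (n - m) *
      (dag_poly_int w (n - m.+1) u *
       ((1 + w) ^ ((n - m) * m) * dag_poly w (w / (1 + w)) m))))%R).
  apply: is_RInt_ext => [t _|]; first by rewrite /marked sum_marked_sources_ord.
  apply: is_RInt_bigR => m _; do 2 apply: is_RInt_scal.
  set c := (_ * dag_poly w _ m)%R; rewrite Rmult_comm.
  apply: is_RInt_ext (is_RInt_scal _ _ _ c _ (@is_RInt_dag_poly w _ u)) => t _.
  exact: Rmult_comm.
by rewrite -(is_RInt_unique _ _ _ _ int_lhs) (is_RInt_unique _ _ _ _ int_rhs).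
Qed.

Lemma fps_mul1l (a : fps) n : fps_mul fps_one a n = a n.
Proof.
rewrite /fps_mul big_ord_recl big1 /= => [|i _]; last by rewrite Rmult_0_l.
by rewrite subn0; lra.
Qed.

Lemma fps_mulBl (a b c : fps) n :
  fps_mul (fps_sub a b) c n = (fps_mul a c n - fps_mul b c n)%R.
Proof.
rewrite /fps_mul /fps_sub; elim/big_rec3: _ => [|i x y z _ ->]; lra.
Qed.

Lemma fps_inv_list_size (b : fps) n : size (fps_inv_list b n) = n.+1.
Proof. by elim: n => //= n IH; rewrite size_rcons IH. Qed.

Lemma nth_fps_inv_list (b : fps) n k : (k <= n)%N -> nth 0%R (fps_inv_list b n) k = fps_inv b k.
Proof.
elim: n => [|n IH]; first by rewrite leqn0 => /eqP ->.
rewrite leq_eqVlt => /orP [/eqP -> // | ].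
by rewrite ltnS => kn /=; rewrite nth_rcons fps_inv_list_size ltnS kn IH.
Qed.

Lemma fps_inv_unique (b c : fps) : b 0%N <> 0%R ->
  (forall n, fps_mul b c n = fps_one n) -> forall n, fps_inv b n = c n.
Proof.
move=> b0 bc n; elim: n {-2}n (leqnn n) => [|n IH] k.
  rewrite leqn0 => /eqP ->; have := bc 0%N.
  rewrite /fps_mul big_ord1 /fps_inv /= => e; field_simplify_eq => //; lra.
rewrite leq_eqVlt => /orP [/eqP -> | ]; last by rewrite ltnS; apply: IH.
rewrite /fps_inv /= nth_rcons fps_inv_list_size ltnn eqxx.
rewrite (eq_bigr (fun i : 'I_n.+1 => b i.+1 * c (n - i)%N)%R) => [|i _]; last first.
  by rewrite nth_fps_inv_list ?leq_subr // IH ?leq_subr.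
have := bc n.+1; rewrite /fps_mul big_ord_recl subn0.
rewrite (eq_bigr (fun i : 'I_n.+1 => b i.+1 * c (n - i)%N)%R) //.
move: (\big[Rplus/0%R]_(i < n.+1) _) => S /= e.
have -> : S = (- (b 0%N * c n.+1))%R by lra.
by field.
Qed.

Definition dag_norm (w : R) (k : nat) : R := ((1 + w) ^ 'C(k, 2) * INR k`!)%R.

Lemma bin2_addS k m : 'C((k + m).+1, 2) = ('C(k, 2) + 'C(m, 2) + k.+1 * m + k)%N.
Proof.
elim: k => [|k IH]; first by rewrite add0n binS bin1 bin0n; lia.
by rewrite addSn binS IH bin1 [in RHS]binS bin1; lia.
Qed.

Lemma dag_term_norm (w : R) (k m : nat) (Ik am : R) : (1 + w <> 0)%R ->
  (INR 'C((k + m).+1, m) * (INR k.+1 * (Ik * ((1 + w) ^ (k.+1 * m) * am)))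
     / dag_norm w (k + m).+1)%R
  = ((/ (1 + w)) ^ k / dag_norm w k * Ik * (am / dag_norm w m))%R.
Proof.
move=> w1; set n := (k + m).+1.
have fact_n : n`! = ('C(n, m) * (m`! * (k.+1 * k`!)))%N.
  by rewrite -factS -(_ : n - m = k.+1)%N ?bin_fact // /n; lia.
have fact_neq0 j : INR j`! <> 0%R by apply: not_0_INR; have := fact_gt0 j; lia.
have pw j : ((1 + w) ^ j <> 0)%R by apply: pow_nonzero.
have C_neq0 : INR 'C(n, m) <> 0%R by apply/not_0_INR/eqP; rewrite -lt0n bin_gt0 /n; lia.
have Sk_neq0 : INR k.+1 <> 0%R by apply: not_0_INR.
rewrite /dag_norm fact_n /n bin2_addS !mult_INR !pow_add pow_inv.
by field; repeat split; first [apply: fact_neq0 | apply: pw | done].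
Qed.

Lemma DAGE w u n : DAG w u n = (dag_poly w u n / dag_norm w n)%R.
Proof. by []. Qed.

Lemma H_coefS w u k : H w u k.+1 = ((/ (1 + w)) ^ k / dag_norm w k * dag_poly_int w k u)%R.
Proof.
apply: is_RInt_unique.
apply: is_RInt_ext (is_RInt_scal _ _ _ ((/ (1 + w)) ^ k / dag_norm w k) _
                     (@is_RInt_dag_poly w k u)) => t _.
by rewrite /fps_scale DAGE /scal /= /mult /= /Rdiv; ring.
Qed.

Lemma dag_poly0 w u : dag_poly w u 0 = 1%R.
Proof.
have no_vertex (v : 'I_0) : False by case: v => m; rewrite ltn0.
have noarc (E : digraph 0) : E = set0 by apply/setP => [[v v']]; case: (no_vertex v).
rewrite /dag_poly (big_pred1 set0) => [|E]; last first.
  by rewrite (noarc E) /= eqxx; apply/forallP => v; case: (no_vertex v).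
have nsources0 : nsources (set0 : digraph 0) = 0%N.
  by apply: eq_card0 => v; case: (no_vertex v).
by rewrite /nedges cards0 nsources0 /= Rmult_1_l.
Qed.

Lemma DAG_one_add_H_mul w u n : (1 + w <> 0)%R ->
  DAG w u n = (fps_one n + fps_mul (H w u) (DAG w (w / (1 + w))) n)%R.
Proof.
move=> w1; have H0 : H w u 0%N = 0%R by [].
case: n => [|n].
  by rewrite DAGE dag_poly0 /fps_mul big_ord1 H0 /dag_norm /=; lra.
rewrite DAGE dag_poly_recursion // big_ord_recr /= subnn Rmult_0_l Rmult_0_r Rplus_0_r.
rewrite /fps_mul big_ord_recl H0 Rmult_0_l !Rplus_0_l.
rewrite {1}/Rdiv big_distrl [RHS](reindex_inj rev_ord_inj).
apply: eq_bigr => [[m ltmn]] _; rewrite lift0 H_coefS DAGE /=.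
rewrite ltnS in ltmn; rewrite !subSS subSn // subKn //.
move: (n - m)%N (subnK ltmn) => k <-.
exact: dag_term_norm.
Qed.

Lemma fps_inv_one_sub_H w : (1 + w <> 0)%R ->
  forall n, fps_inv (fps_sub fps_one (H w (w / (1 + w)))) n = DAG w (w / (1 + w)) n.
Proof.
move=> w1; apply: fps_inv_unique => [|n]; first by rewrite /fps_sub /=; lra.
by rewrite fps_mulBl fps_mul1l (@DAG_one_add_H_mul w (w / (1 + w)) n w1); lra.
Qed.

Theorem lemma10 (w : R) (hw : (0 < w)%R) (u : R) :
  DAG w u =
  fps_add fps_one
    (fps_div (H w u) (fps_sub fps_one (H w (w / (1 + w))%R))).
Proof.
have w1 : (1 + w <> 0)%R by lra.
apply: functional_extensionality => n.
rewrite /fps_add /fps_div (@DAG_one_add_H_mul w u n w1) /fps_mul; congr (_ + _)%R.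
by apply: eq_bigr => k _; rewrite fps_inv_one_sub_H.
Qed.
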